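(* Let $\mathfrak g=\mathfrak k\oplus\mathfrak m$ be a Pauli-spanned Cartan decomposition, and let $b_1\neq b_2$ be two commuting Pauli strings in $\tilde{\mathfrak m}$ lying in the same connected component of the frustration graph of $\mathfrak g$. Then $|\tilde{\mathfrak k}^1_2|=|\tilde{\mathfrak k}^2_1|$.
   Context: Pauli strings on $n$ qubits are tensor products of $I,X,Y,Z$, not all identity; two Pauli strings either commute or anticommute. A Pauli-spanned Cartan decomposition is $\mathfrak g=\mathfrak k\oplus\mathfrak m\subseteq\mathfrak{su}(2^n)$ with $\mathfrak k=\mathrm{span}_{i\mathbb R}\tilde{\mathfrak k}$, $\mathfrak m=\mathrm{span}_{i\mathbb R}\tilde{\mathfrak m}$, $\mathfrak g=\mathrm{span}_{i\mathbb R}\tilde{\mathfrak g}$ with $\tilde{\mathfrak g}=\tilde{\mathfrak k}\sqcup\tilde{\mathfrak m}$ the set of all Pauli strings (up to phase) $\sigma$ with $i\sigma\in\mathfrak g$, and $[\mathfrak k,\mathfrak k]\subseteq\mathfrak k$, $[\mathfrak m,\mathfrak m]\subseteq\mathfrak k$, $[\mathfrak k,\mathfrak m]\subseteq\mathfrak m$. The frustration graph of $\mathfrak g$ has vertex set $\tilde{\mathfrak g}$, with edges between anticommuting pairs. For Pauli strings $b_1,b_2,\dots$ and disjoint index lists, $\tilde{\mathfrak k}^{i_1i_2\dots}_{j_1j_2\dots}$ is the set of $k\in\tilde{\mathfrak k}$ anticommuting with every $b_{i_p}$ and commuting with every $b_{j_q}$ (no condition on other indices). *)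

From mathcomp Require Import all_boot.
Set Implicit Arguments. Unset Strict Implicit. Unset Printing Implicit Defensive.

(* Single-qubit Pauli (up to phase): 0 = I, 1 = X, 2 = Y, 3 = Z. *)
Definition pauli1 := 'I_4.

(* Product of single-qubit Paulis up to phase:
   I*P = P*I = P,  P*P = I,  and for distinct non-identity P,Q the product is
   the third non-identity Pauli (index 6 - P - Q since 1+2+3 = 6). *)
Definition pmul1 (a b : pauli1) : pauli1 :=
  if val a == 0 then b
  else if val b == 0 then a
  else if a == b then ord0
  else inord (6 - a - b).

Definition anti1 (a b : pauli1) : bool :=
  [&& val a != 0, val b != 0 & a != b].

(* n-qubit Pauli strings (tensor products of I,X,Y,Z), up to phase. *)
Definition pstring (n : nat) := {ffun 'I_n -> pauli1}.

Definition pid (n : nat) : pstring n := [ffun _ => ord0].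

Definition pmul n (s t : pstring n) : pstring n := [ffun i => pmul1 (s i) (t i)].

Definition anticomm n (s t : pstring n) : bool :=
  odd #|[set i | anti1 (s i) (t i)]|.

(* Pauli-spanned Cartan decomposition g = k (+) m with k = span_{iR} Kt,
   m = span_{iR} Mt.  For Pauli strings, [i s, i t] = 0 if s,t commute and
   = -2 s t (a nonzero real multiple of i * (pmul s t)) if they anticommute; hence
   [k,k] <= k, [m,m] <= k, [k,m] <= m are exactly the closure conditions below. *)
Definition cartan_decomp n (Kt Mt : {set pstring n}) : Prop :=
  [/\ (pid n \notin Kt) && (pid n \notin Mt), [disjoint Kt & Mt],
      (forall k k', k \in Kt -> k' \in Kt -> anticomm k k' -> pmul k k' \in Kt),
      (forall m m', m \in Mt -> m' \in Mt -> anticomm m m' -> pmul m m' \in Kt) &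
      (forall k m, k \in Kt -> m \in Mt -> anticomm k m -> pmul k m \in Mt)].

Definition frustration n (Gt : {set pstring n}) : rel (pstring n) :=
  fun s t => [&& s \in Gt, t \in Gt & anticomm s t].

(* Kt^{i}_{j} for a single anticommuting b_i and commuting b_j. *)
Definition ksub n (Kt : {set pstring n}) (bi bj : pstring n) : {set pstring n} :=
  [set k in Kt | anticomm k bi && ~~ anticomm k bj].

From mathcomp Require Import all_boot.

(* For m in M count the elements of K anticommuting with m.  If k in K
   anticommutes with m, then s |-> k s on the elements of K anticommuting
   with k (and the identity elsewhere) is an involution of K exchanging
   "anticommutes with m" and "anticommutes with k m"; so the count is the
   same for m and k m.  Two adjacent vertices m, m' of M are related in this
   way by k = m m' in K.  A walk x, k, z, ... with x in M and k in K can be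
   shortened to x, z, ... when x and z anticommute, and otherwise to
   k x, z, ... with k x in M; hence the count is constant on the vertices of
   M in a connected component.  Finally the count at b1 is
   |K^{12}| + |K^1_2| and the count at b2 is |K^{12}| + |K^2_1|. *)

Implicit Types a b c : pauli1.

Lemma val_pmul1 a b : val (pmul1 a b) =
  if val a == 0 then val b else if val b == 0 then val a
  else if val a == val b then 0 else 6 - a - b.
Proof.
by case: a b => [[|[|[|[|?]]]] ?] [[|[|[|[|?]]]] ?] //; rewrite /pmul1 /= inordK.
Qed.

Lemma pmul1K a : cancel (pmul1 a) (pmul1 a).
Proof.
move=> b; apply/val_inj; rewrite !val_pmul1.
by case: a b => [[|[|[|[|?]]]] ?] [[|[|[|[|?]]]] ?].
Qed.

Lemma pmul1C a b : pmul1 a b = pmul1 b a.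
Proof.
apply/val_inj; rewrite !val_pmul1.
by case: a b => [[|[|[|[|?]]]] ?] [[|[|[|[|?]]]] ?].
Qed.

Lemma anti1C a b : anti1 a b = anti1 b a.
Proof. by case: a b => [[|[|[|[|?]]]] ?] [[|[|[|[|?]]]] ?]. Qed.

Lemma anti1xx a : anti1 a a = false.
Proof. by rewrite /anti1 eqxx !andbF. Qed.

Lemma anti1_mull a b c : anti1 (pmul1 a b) c = anti1 a c (+) anti1 b c.
Proof.
rewrite /anti1 -[pmul1 a b == c]val_eqE val_pmul1.
by case: a b c => [[|[|[|[|?]]]] ?] [[|[|[|[|?]]]] ?] [[|[|[|[|?]]]] ?].
Qed.

Lemma odd_card_addb (T : finType) (A B : {pred T}) :
  odd #|[pred i | (i \in A) (+) (i \in B)]| = odd #|A| (+) odd #|B|.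
Proof.
set X := [pred i | _].
rewrite -(cardID B A) -(cardID A B) -(cardID A X).
have -> : #|[predI X & A]| = #|[predD A & B]|.
  by apply: eq_card => i; rewrite !inE; case: (i \in A); case: (i \in B).
have -> : #|[predD X & A]| = #|[predD B & A]|.
  by apply: eq_card => i; rewrite !inE; case: (i \in A); case: (i \in B).
have -> : #|[predI B & A]| = #|[predI A & B]| by apply: eq_card => i; rewrite !inE andbC.
by rewrite !oddD addbACA addbb.
Qed.

Section PauliStrings.

Context {n : nat}.
Implicit Types (s t u : pstring n) (S : {set pstring n}).

Lemma pmulK s : cancel (pmul s) (pmul s).
Proof. by move=> t; apply/ffunP => i; rewrite !ffunE pmul1K. Qed.

Lemma pmulC s t : pmul s t = pmul t s.
Proof. by apply/ffunP => i; rewrite !ffunE pmul1C. Qed.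

Lemma anticommC s t : anticomm s t = anticomm t s.
Proof. by rewrite /anticomm; congr (odd _); apply: eq_card => i; rewrite !inE anti1C. Qed.

Lemma anticommxx s : anticomm s s = false.
Proof. by rewrite /anticomm eq_card0 // => i; rewrite !inE anti1xx. Qed.

Lemma anticomm_mull s t u : anticomm (pmul s t) u = anticomm s u (+) anticomm t u.
Proof.
rewrite /anticomm -odd_card_addb; congr (odd _); apply: eq_card => i.
by rewrite !inE ffunE anti1_mull.
Qed.

Lemma anticomm_mulr s t u : anticomm u (pmul s t) = anticomm u s (+) anticomm u t.
Proof. by rewrite anticommC anticomm_mull !(anticommC u). Qed.

Definition anticomm_closed S :=
  {in S &, forall s t, anticomm s t -> pmul s t \in S}.

Definition anticommutant S s := [set k in S | anticomm k s].

Lemma ksubE S s t : ksub S s t = anticommutant S s :\: anticommutant S t.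
Proof. by apply/setP => k; rewrite !inE; case: (k \in S) => //=; rewrite andbC. Qed.

Definition mul_if_anti k s := if anticomm k s then pmul k s else s.

Lemma mul_if_antiK k : involutive (mul_if_anti k).
Proof.
move=> s; rewrite /mul_if_anti; case ks: (anticomm k s); last by rewrite ks.
by rewrite anticomm_mulr anticommxx ks /= pmulK.
Qed.

Lemma anticomm_mul_if_anti k s m : anticomm k m ->
  anticomm (mul_if_anti k s) (pmul k m) = anticomm s m.
Proof.
move=> km; rewrite /mul_if_anti; case ks: (anticomm k s).
  by rewrite anticomm_mull !anticomm_mulr anticommxx km [anticomm s k]anticommC ks /= negbK.
by rewrite anticomm_mulr [anticomm s k]anticommC ks.
Qed.

Section ClosedSet.

Variable Kt : {set pstring n}.
Hypothesis closedK : anticomm_closed Kt.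

Lemma mem_mul_if_anti k s : k \in Kt -> (mul_if_anti k s \in Kt) = (s \in Kt).
Proof.
move=> kK; rewrite /mul_if_anti; case: ifP => // ks.
apply/idP/idP => [ksK | sK]; last exact: closedK.
by rewrite -(pmulK k s); apply: closedK; rewrite // anticomm_mulr anticommxx ks.
Qed.

Lemma card_anticommutant_mul k m : k \in Kt -> anticomm k m ->
  #|anticommutant Kt (pmul k m)| = #|anticommutant Kt m|.
Proof.
move=> kK km; rewrite -(card_preimset _ (inv_inj (mul_if_antiK k))).
apply: eq_card => s.
by rewrite !inE mem_mul_if_anti // anticomm_mul_if_anti.
Qed.

End ClosedSet.

Section CartanDecomposition.

Variables Kt Mt : {set pstring n}.
Hypothesis disjointKM : [disjoint Kt & Mt].
Hypothesis closedK : anticomm_closed Kt.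
Hypothesis closedMM : {in Mt &, forall m m', anticomm m m' -> pmul m m' \in Kt}.
Hypothesis closedKM : {in Kt & Mt, forall k m, anticomm k m -> pmul k m \in Mt}.

Lemma card_anticommutant_adjM m m' : m \in Mt -> m' \in Mt -> anticomm m m' ->
  #|anticommutant Kt m'| = #|anticommutant Kt m|.
Proof.
move=> mM m'M mm'; have mm'K : pmul m m' \in Kt by apply: closedMM.
have -> : m' = pmul (pmul m m') m by rewrite pmulC pmulK.
apply: card_anticommutant_mul => //.
by rewrite anticomm_mull anticommxx anticommC.
Qed.

Lemma shortcut_Kvertex x k z : x \in Mt -> k \in Kt -> anticomm x k -> anticomm k z ->
  exists x', [/\ x' \in Mt, anticomm x' z & #|anticommutant Kt x'| = #|anticommutant Kt x|].
Proof.
move=> xM kK xk kz; case xz: (anticomm x z); first by exists x.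
rewrite anticommC in xk; exists (pmul k x); split; first exact: closedKM.
  by rewrite anticomm_mull kz xz.
exact: card_anticommutant_mul.
Qed.

Lemma card_anticommutant_path x p : x \in Mt ->
  path (frustration (Kt :|: Mt)) x p -> last x p \in Mt ->
  #|anticommutant Kt (last x p)| = #|anticommutant Kt x|.
Proof.
have [N] := ubnP (size p); elim: N p x => // N IH [|y p] x //= ltpN xM.
case/andP=> /and3P[_ yG xy] yp lastM.
case/setUP: yG => [yK | yM]; last first.
  by rewrite (IH p y) //; apply: card_anticommutant_adjM.
case: p ltpN yp lastM => [_ _ /= yM | z p ltpN /= /andP[/and3P[_ zG yz] zp] lastM].
  by rewrite (disjointFr disjointKM yK) in yM.
have [x' [x'M x'z <-]] := shortcut_Kvertex _ _ _ xM yK xy yz.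
by rewrite (IH (z :: p) x') //= /frustration inE x'M orbT zG x'z.
Qed.

End CartanDecomposition.

End PauliStrings.

Theorem lemmaC1 (n : nat) (Kt Mt : {set pstring n}) (b1 b2 : pstring n) :
  cartan_decomp Kt Mt ->
  b1 \in Mt -> b2 \in Mt -> b1 != b2 -> ~~ anticomm b1 b2 ->
  connect (frustration (Kt :|: Mt)) b1 b2 ->
  #|ksub Kt b1 b2| = #|ksub Kt b2 b1|.
Proof.
case=> _ disjointKM closedK closedMM closedKM b1M b2M _ _ /connectP[p b1p b2E].
have card12 : #|anticommutant Kt b2| = #|anticommutant Kt b1|.
  by rewrite b2E (card_anticommutant_path Kt Mt) // -b2E.
apply/eqP; rewrite !ksubE.
rewrite -(eqn_add2l #|anticommutant Kt b1 :&: anticommutant Kt b2|) cardsID.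
by rewrite setIC cardsID card12.
Qed.
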